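(* In the discrete first-price auction with $n=2$ bidders, in the model without ties, and with values drawn independently and uniformly from $X=\{0,1,\dots,x\}$, the symmetric equilibria are exactly $\beta(v)=\lfloor v/2\rfloor$ and $\beta(v)=\lceil v/2\rceil$.
   Context: Model. There are $n$ risk-neutral bidders competing for one indivisible object. Values and bids lie in $X=\{0,1,2,\dots,x\}$ for some $x\in\mathbb N$. Each bidder privately learns a value drawn independently and uniformly from $X$ (each value has probability $1/(x+1)$). Each bidder submits a bid in $X$. A (pure) strategy is a bidding function $\beta:X\to X$. In the model without ties, bidder $i$ wins iff $b_i>b_j$ for all $j\neq i$ (if the highest bid is tied, nobody wins). In the first-price auction, a bidder with value $v_i$ bidding $b_i$ gets expected payoff $(v_i-b_i)\Pr(i\text{ wins})$. An equilibrium is a profile of bidding functions such that each bidder's bidding function maximises their expected payoff given the others' bidding functions (a pure-strategy Bayes–Nash equilibrium) and such that no bidder uses a weakly dominated bidding function (a bidding function is weakly dominated if some other bidding function yields at least as high expected payoff against every profile of opponents' bidding functions, and strictly higher against some). A symmetric equilibrium (SE) is an equilibrium in which all bidders use the same bidding function. *)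

From mathcomp Require Import all_boot all_order all_algebra.
Set Implicit Arguments. Unset Strict Implicit. Unset Printing Implicit Defensive.
Import Order.TTheory GRing.Theory Num.Theory.
Local Open Scope ring_scope.

(* The value/bid set X = {0,...,x} is 'I_x.+1. A (pure) bidding function. *)
Definition bidfun (x : nat) := 'I_x.+1 -> 'I_x.+1.

(* Probability that a bidder bidding b wins (strictly highest bid, no ties)
   against an opponent with uniform value w in X using bidding function g. *)
Definition win_prob (x : nat) (b : 'I_x.+1) (g : bidfun x) : rat :=
  \sum_(w : 'I_x.+1) (x.+1%:R)^-1 * (if (g w < b)%N then 1 else 0).

Definition interim_payoff (x : nat) (v b : 'I_x.+1) (g : bidfun x) : rat :=
  ((v : nat)%:R - (b : nat)%:R) * win_prob b g.

Definition payoff (x : nat) (f g : bidfun x) : rat :=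
  \sum_(v : 'I_x.+1) (x.+1%:R)^-1 * interim_payoff v (f v) g.

Definition weakly_dominated (x : nat) (f : bidfun x) : Prop :=
  exists f' : bidfun x,
    (forall g : bidfun x, payoff f g <= payoff f' g) /\
    (exists g : bidfun x, payoff f g < payoff f' g).

Definition best_response (x : nat) (f g : bidfun x) : Prop :=
  forall f' : bidfun x, payoff f' g <= payoff f g.

Definition equilibrium (x : nat) (b1 b2 : bidfun x) : Prop :=
  best_response b1 b2 /\ best_response b2 b1 /\
  ~ weakly_dominated b1 /\ ~ weakly_dominated b2.

Definition symmetric_equilibrium (x : nat) (beta : bidfun x) : Prop :=
  equilibrium beta beta.

From mathcomp Require Import all_boot all_order all_algebra.
From mathcomp Require Import zify ring lra.
Set Implicit Arguments. Unset Strict Implicit. Unset Printing Implicit Defensive.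
Import Order.TTheory GRing.Theory Num.Theory.
Local Open Scope ring_scope.

(* All payoffs are positive multiples of an integer score: a bidder with
   value v bidding b against the opponent strategy g gets (v - b) times
   wins b g, the number of opponent values whose bid is below b.

   Necessity.  Bidding above one's value is weakly dominated (bidding the
   value itself is never worse, and strictly better against the constant
   bid 0); a best reply to oneself is monotone (single crossing).  With
   e := beta 1, which is 0 or 1, strong induction on v then shows
   beta v = (v + e) / 2: if beta agrees with this on all values below v,
   any other bid at v is beaten by a one-step deviation (two parity cases).

   Sufficiency.  Against beta v = (v + e) / 2, the bid b wins
   min (2b - e, x + 1) times and (v - b)(2b - e) is a concave quadratic in b
   maximised at (v + e) / 2.  Undominatedness is shown by averaging: payoffs
   are linear in the opponent's strategy, so it suffices that beta maximises
   the total payoff against all constant opponents, which is the average of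
   (v - b) b and is maximised at b = (v + e) / 2. *)

(* An integer is at most its square in absolute value, hence |c| <= k
   implies d c <= k d^2; this is the discrete concavity used below. *)
Lemma mul_le_k_sqr (d c : int) (k : nat) : `|c| <= k%:Z -> d * c <= k%:Z * (d * d).
Proof.
move=> hc.
have hd : `|d| <= d * d.
  by case: (ltrP d 0) => h; [rewrite ltr0_norm | rewrite ger0_norm]; nia.
apply: (le_trans (ler_norm _)); rewrite normrM.
apply: (le_trans (ler_wpM2l (normr_ge0 d) hc)); rewrite mulrC.
by apply: ler_wpM2l.
Qed.

Lemma concave_max (v b e : nat) : (e <= 1)%N ->
  (v%:Z - b%:Z) * (2 * b%:Z - e%:Z) <=
  (v%:Z - ((v + e) %/ 2)%N%:Z) * (2 * ((v + e) %/ 2)%N%:Z - e%:Z).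
Proof.
move=> he; have := divn_eq (v + e) 2; have := ltn_mod (v + e) 2.
move: ((v + e) %/ 2)%N ((v + e) %% 2)%N => q r hr hv.
have := @mul_le_k_sqr (b%:Z - q%:Z) (2 * r%:Z - e%:Z) 2.
have : `|2 * r%:Z - e%:Z| <= 2%:Z by rewrite ler_norml; lia.
move=> /[swap] /[apply]; nia.
Qed.

Lemma revenue_max (v b e : nat) : (e <= 1)%N ->
  (v%:Z - b%:Z) * b%:Z <= (v%:Z - ((v + e) %/ 2)%N%:Z) * ((v + e) %/ 2)%N%:Z.
Proof.
move=> he; have := divn_eq (v + e) 2; have := ltn_mod (v + e) 2.
move: ((v + e) %/ 2)%N ((v + e) %% 2)%N => q r hr hv.
have := @mul_le_k_sqr (b%:Z - q%:Z) (r%:Z - e%:Z) 1.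
have : `|r%:Z - e%:Z| <= 1%:Z by rewrite ler_norml; lia.
move=> /[swap] /[apply]; nia.
Qed.

Lemma count_prefix (n k : nat) : (\sum_(w < n) (w < k : nat))%N = minn k n.
Proof. by elim: n => [|n IH]; rewrite ?big_ord0 ?big_ord_recr /= ?IH; lia. Qed.

Section Auction.
Variable x : nat.
Local Notation N := x.+1.
Implicit Types (v w b : 'I_N) (f g : bidfun x).

Definition wins b g : nat := (\sum_w (g w < b : nat))%N.

(* Interim payoff scaled by the number x + 1 of values: an integer. *)
Definition score v b g : int := (v%:Z - b%:Z) * (wins b g)%:Z.

Lemma win_prob_wins b g : win_prob b g = (wins b g)%:R / N%:R.
Proof.
rewrite /win_prob /wins natr_sum mulr_suml; apply: eq_bigr => w _.
by case: (g w < b)%N; rewrite ?mulr1 ?div1r ?mulr0 ?mul0r.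
Qed.

Lemma interim_payoff_score v b g :
  interim_payoff v b g = (score v b g)%:~R / N%:R.
Proof. by rewrite /interim_payoff win_prob_wins /score intrM intrB mulrA. Qed.

Lemma interim_payoff_le v b g v' b' g' :
  (interim_payoff v b g <= interim_payoff v' b' g') = (score v b g <= score v' b' g').
Proof. by rewrite !interim_payoff_score ler_pM2r ?invr_gt0 ?ltr0Sn // ler_int. Qed.

Lemma interim_payoff_lt v b g v' b' g' :
  (interim_payoff v b g < interim_payoff v' b' g') = (score v b g < score v' b' g').
Proof. by rewrite !interim_payoff_score ltr_pM2r ?invr_gt0 ?ltr0Sn // ltr_int. Qed.

Definition upd f v b : bidfun x := fun w => if w == v then b else f w.

Lemma payoff_upd f v b g : payoff (upd f v b) g =
  payoff f g + N%:R^-1 * (interim_payoff v b g - interim_payoff v (f v) g).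
Proof.
rewrite /payoff (bigD1 v) //= [in RHS](bigD1 v) //= /upd eqxx.
under eq_bigr => w /negbTE -> do [].
ring.
Qed.

Lemma payoff_upd_le f v b g :
  (payoff (upd f v b) g <= payoff f g) = (score v b g <= score v (f v) g).
Proof.
by rewrite payoff_upd gerDl pmulr_rle0 ?invr_gt0 ?ltr0Sn // subr_le0 interim_payoff_le.
Qed.

Lemma best_responseP f g :
  best_response f g <-> forall v b, score v b g <= score v (f v) g.
Proof.
split=> [br v b | hf f']; first by rewrite -payoff_upd_le; apply: br.
apply: ler_sum => v _.
by rewrite ler_pM2l ?invr_gt0 ?ltr0Sn // interim_payoff_le.
Qed.

Lemma wins_ge_prefix b g (k : nat) : (k <= N)%N ->
  (forall w, (w < k)%N -> (g w < b)%N) -> (k <= wins b g)%N.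
Proof.
move=> kN hk; rewrite -[k](minn_idPl kN) -count_prefix.
by apply: leq_sum => w _; case: ltnP => // /hk ->.
Qed.

Lemma wins_le_prefix b g (k : nat) :
  (forall w, (k <= w)%N -> (b <= g w)%N) -> (wins b g <= k)%N.
Proof.
move=> hk; apply: (@leq_trans (minn k N)); last exact: geq_minl.
rewrite -count_prefix; apply: leq_sum => w _.
case: (ltnP w k) => [_|/hk]; first exact: leq_b1.
by rewrite leqNgt => /negbTE ->.
Qed.

Lemma wins_const b (k : 'I_N) : wins b (fun _ => k) = if (k < b)%N then N else 0%N.
Proof. by rewrite /wins sum_nat_const card_ord; case: (k < b)%N; lia. Qed.

(* Overbidding is weakly dominated by bidding one's value. *)
Lemma no_overbid f : ~ weakly_dominated f -> forall v, (f v <= v)%N.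
Proof.
move=> undom v; rewrite leqNgt; apply/negP => overbid; apply: undom.
exists (upd f v v); split=> [g | ].
  rewrite -subr_ge0 payoff_upd addrAC subrr add0r pmulr_rge0 ?invr_gt0 ?ltr0Sn //.
  rewrite subr_ge0 interim_payoff_le /score subrr mul0r; nia.
exists (fun _ => ord0); rewrite -subr_gt0 payoff_upd addrAC subrr add0r.
rewrite pmulr_rgt0 ?invr_gt0 ?ltr0Sn // subr_gt0 interim_payoff_lt.
rewrite /score !wins_const /= subrr mul0r (leq_ltn_trans (leq0n v) overbid); nia.
Qed.

Lemma wins_lt g w b b' : g w = b' -> (b' < b)%N -> (wins b' g < wins b g)%N.
Proof.
move=> gw lt_b'b; rewrite /wins (bigD1 w) // [X in (_ < X)%N](bigD1 w) //= gw.
rewrite ltnn lt_b'b add0n add1n ltnS; apply: leq_sum => u _.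
by case: (ltnP (g u) b') => // /leq_trans/(_ (ltnW lt_b'b)) ->.
Qed.

(* Single crossing: adding the two best-reply inequalities at values v < v'
   with f v > f v' gives (v' - v)(wins (f v') - wins (f v)) >= 0, absurd. *)
Lemma best_reply_monotone f : best_response f f ->
  forall v v', (v <= v')%N -> (f v <= f v')%N.
Proof.
move=> /best_responseP br v v' le_vv'; rewrite leqNgt; apply/negP => gt_f.
have lt_wins := wins_lt (erefl (f v')) gt_f.
have := br v (f v'); have := br v' (f v); rewrite /score.
have lt_vv' : (v < v')%N.
  by rewrite ltn_neqAle le_vv' andbT; apply: contraTneq gt_f => /ord_inj ->; rewrite ltnn.
nia.
Qed.

(* Inductive step: if a best reply to itself bids (w + e) / 2 at every value
   w below n >= 2, it bids (n + e) / 2 at n, as every other bid at n is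
   beaten by a deviation to (n - 1 + e) / 2 or one above it. *)
Section InductionStep.
Variables (f : bidfun x) (e n : nat) (v : 'I_N).
Hypotheses (f_br : best_response f f) (e_le1 : (e <= 1)%N) (n_ge2 : (2 <= n)%N).
Hypotheses (v_val : (v : nat) = n)
  (f_below : forall w, (w < n)%N -> (f w : nat) = ((w + e) %/ 2)%N).

Let f_mono := best_reply_monotone f_br.
Let deviation (b : 'I_N) : score v b f <= score v (f v) f :=
  (best_responseP f f).1 f_br v b.

Lemma n_lt_N : (n < N)%N. Proof. by rewrite -v_val ltn_ord. Qed.

Lemma inord_le_n (b : nat) : (b <= n)%N -> (inord b : 'I_N) = b :> nat.
Proof. by move=> le_bn; rewrite inordK //; have := n_lt_N; lia. Qed.

Lemma wins_above_below (b : 'I_N) :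
  (n - 1 + e < (b : nat).*2)%N -> (n <= wins b f)%N.
Proof.
move=> lt_b; apply: wins_ge_prefix => [|w lt_wn]; first exact: ltnW n_lt_N.
by rewrite f_below //; lia.
Qed.

(* By monotonicity the current bid f v loses to all values from n on. *)
Lemma wins_current (k : nat) :
  (forall w, (k <= w < n)%N -> (f v <= f w)%N) -> (wins (f v) f <= k)%N.
Proof.
move=> hk; apply: wins_le_prefix => w le_kw; case: (ltnP w n) => [lt_wn | le_nw].
  by apply: hk; rewrite le_kw.
by apply: f_mono; rewrite v_val.
Qed.

Lemma f_value_ge : (((n - 1 + e) %/ 2)%N <= f v)%N.
Proof.
have w_val : (inord (n - 1) : 'I_N) = (n - 1)%N :> nat by apply: inord_le_n; lia.
have := @f_below (inord (n - 1)); rewrite w_val => <-; last by lia.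
by apply: f_mono; rewrite w_val v_val; lia.
Qed.

(* Odd case: bidding p is beaten by p + 1 (n + 1 wins instead of n - 2),
   a bid above p + 1 is beaten by p + 1 (at least as many wins). *)
Lemma step_odd (p : nat) : (n - 1 + e = p.*2.+1)%N -> (f v : nat) = p.+1.
Proof.
move=> odd_p; have ge_p := f_value_ge.
set b : 'I_N := inord p.+1.
have b_val : b = p.+1 :> nat by apply: inord_le_n; lia.
have := deviation b; rewrite /score b_val v_val.
case: (ltngtP (f v) p.+1) => [lt_fv | gt_fv | //] dev; exfalso.
- have fv_p : (f v : nat) = p by lia.
  have wins_b : (n.+1 <= wins b f)%N.
    apply: wins_ge_prefix => [|w lt_wn1]; first exact: n_lt_N.
    rewrite b_val; case: (ltnP w n) => [lt_wn | ge_wn]; first by rewrite f_below //; lia.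
    by have -> : w = v by apply: ord_inj; lia.
  have wins_fv : (wins (f v) f <= n - 2)%N.
    by apply: wins_current => w /andP [le_w lt_wn]; rewrite (f_below lt_wn); lia.
  move: dev; rewrite fv_p; nia.
- have wins_b : (n <= wins b f)%N by apply: wins_above_below; rewrite b_val; lia.
  have wins_fv : (wins (f v) f <= n)%N by apply: wins_current => w; lia.
  nia.
Qed.

(* Even case: a bid above p is beaten by p (n - 1 wins instead of at most n). *)
Lemma step_even (p : nat) : (n - 1 + e = p.*2)%N -> (f v : nat) = p.
Proof.
move=> even_p; have ge_p := f_value_ge.
case: (ltngtP (f v) p) => [lt_fv | gt_fv | //]; first lia; exfalso.
set b : 'I_N := inord p.
have b_val : b = p :> nat by apply: inord_le_n; lia.
have := deviation b; rewrite /score b_val v_val => dev.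
have wins_b : (n - 1 <= wins b f)%N.
  apply: wins_ge_prefix => [|w lt_wn1]; first by have := n_lt_N; lia.
  by rewrite b_val f_below; lia.
have wins_fv : (wins (f v) f <= n)%N by apply: wins_current => w; lia.
nia.
Qed.

Lemma step_half : (f v : nat) = ((n + e) %/ 2)%N.
Proof.
have := divn_eq (n - 1 + e) 2; have := ltn_mod (n - 1 + e) 2.
case: ((n - 1 + e) %% 2)%N => [|[|//]] _ split_n.
- by rewrite (step_even (p := ((n - 1 + e) %/ 2)%N)); lia.
- by rewrite (step_odd (p := ((n - 1 + e) %/ 2)%N)); lia.
Qed.

End InductionStep.

Definition halves (e : nat) f : Prop := forall v, (f v : nat) = ((v + e) %/ 2)%N.

(* Strong induction on the value, with base cases 0 (no overbidding)
   and 1 (the definition of e). *)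
Lemma halves_of_best_reply f (e : nat) : best_response f f ->
  (forall v, (f v <= v)%N) -> (e <= 1)%N ->
  (forall v, (v : nat) = 1%N -> (f v : nat) = e) -> halves e f.
Proof.
move=> br no_over e_le1 f_one v.
elim/ltn_ind: {v}(v : nat) {-2}v (erefl (v : nat)) => n IH v v_val.
case: (ltnP n 2) => [lt_n2 | ge_n2].
  case: (n =P 1%N) => [n1 | n_ne1]; first by rewrite f_one v_val n1 //; lia.
  by have := no_over v; rewrite v_val; lia.
rewrite v_val; apply: step_half => // w lt_wn; exact: IH lt_wn w erefl.
Qed.

Lemma equilibrium_halves f : symmetric_equilibrium f -> halves 0 f \/ halves 1 f.
Proof.
move=> [br [_ [undom _]]]; have no_over := no_overbid undom.
have f_one v : (v : nat) = 1%N -> (f v : nat) = f (inord 1).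
  by move=> v1; congr (nat_of_ord (f _)); apply: ord_inj; rewrite inordK // -v1.
have le_e1 : (f (inord 1) <= 1)%N.
  apply: leq_trans (no_over _) _; case: (ltnP 1 N) => [/inordK -> // | le_N1].
  by have := ltn_ord (inord 1 : 'I_N); lia.
have halves_e := halves_of_best_reply br no_over le_e1 f_one.
by case: (f (inord 1) : nat) le_e1 halves_e => [|[|//]] _ h; [left|right].
Qed.

Lemma win_prob_const b (k : 'I_N) : win_prob b (fun _ => k) = (k < b)%:R.
Proof.
rewrite win_prob_wins wins_const; case: (k < b)%N; last by rewrite mul0r.
by rewrite divff // pnatr_eq0.
Qed.

(* The winning probability, hence the payoff, is linear in the opponent's
   strategy: it is the average over constant opponents. *)
Lemma win_prob_average b g :
  win_prob b g = N%:R^-1 * \sum_w win_prob b (fun _ => g w).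
Proof.
rewrite {1}/win_prob mulr_sumr; apply: eq_bigr => w _; rewrite win_prob_const.
by case: (g w < b)%N.
Qed.

Lemma payoff_average f g :
  payoff f g = N%:R^-1 * \sum_w payoff f (fun _ => g w).
Proof.
rewrite /payoff exchange_big /= mulr_sumr; apply: eq_bigr => v _.
rewrite /interim_payoff -!mulr_sumr win_prob_average.
ring.
Qed.

(* Summed over all constant opponents, the bid f v wins f v times. *)
Lemma total_payoff_const f : \sum_(k : 'I_N) payoff f (fun _ => k) =
  \sum_(v : 'I_N) N%:R^-1 * (((v : nat)%:Z - (f v : nat)%:Z) * (f v : nat)%:Z)%:~R.
Proof.
rewrite /payoff exchange_big /=; apply: eq_bigr => v _.
rewrite /interim_payoff -!mulr_sumr.
under eq_bigr do rewrite win_prob_const.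
rewrite -natr_sum count_prefix (minn_idPl (ltnW (ltn_ord _))).
by rewrite intrM intrB.
Qed.

(* A strategy maximising the total payoff against constant opponents is
   undominated: a weakly better strategy must tie against every constant
   opponent, hence (by linearity) against every opponent. *)
Lemma undominated_of_max_total f :
  (forall f', \sum_(k : 'I_N) payoff f' (fun _ => k) <=
              \sum_(k : 'I_N) payoff f (fun _ => k)) -> ~ weakly_dominated f.
Proof.
move=> fmax [f' [f'_ge [g f'_gt]]].
have gap0 : \sum_(k : 'I_N) (payoff f' (fun _ => k) - payoff f (fun _ => k)) = 0.
  apply/eqP; rewrite eq_le sumr_ge0 ?andbT => [|k _]; last by rewrite subr_ge0.
  by rewrite sumrB subr_le0.
have same k : payoff f (fun _ => k) = payoff f' (fun _ => k).
  apply/eqP; rewrite eq_sym -subr_eq0; apply/eqP.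
  by apply: (psumr_eq0P _ gap0) => // i _; rewrite subr_ge0.
move: f'_gt; rewrite !(payoff_average _ g).
by under eq_bigr do rewrite same; rewrite ltxx.
Qed.

Section HalfBidding.
Variables (e : nat) (f : bidfun x).
Hypotheses (e_le1 : (e <= 1)%N) (f_half : halves e f).

(* The bid b beats exactly the values w with w + e < 2b. *)
Lemma wins_halves b : wins b f = minn (b.*2 - e) N.
Proof.
rewrite /wins -count_prefix; apply: eq_bigr => w _; rewrite f_half.
by case: ltnP; case: ltnP; lia.
Qed.

(* Bidding b >= v scores at most 0, bids with 2b < e never win, and
   otherwise the score is at most (v - b)(2b - e) <= the score of f v. *)
Lemma halves_best_reply : best_response f f.
Proof.
apply/best_responseP => v b; rewrite /score !wins_halves f_half.
set q := ((v + e) %/ 2)%N.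
have q_wins : minn (q.*2 - e) N = (q.*2 - e)%N by have := ltn_ord v; lia.
have rhs_ge0 : 0 <= (v%:Z - q%:Z) * (minn (q.*2 - e) N)%:Z by rewrite q_wins; nia.
case: (leqP v b) => [le_vb | lt_bv].
  by apply: le_trans rhs_ge0; apply: mulr_le0_ge0; lia.
case: (leqP e b.*2) => [le_eb | lt_be]; last first.
  by rewrite (_ : minn _ _ = 0%N) ?mulr0 //; lia.
have := concave_max v b e_le1; rewrite -/q q_wins.
have := geq_minl (b.*2 - e) N; nia.
Qed.

(* f maximises (v - b) b at each value, hence the total payoff. *)
Lemma halves_undominated : ~ weakly_dominated f.
Proof.
apply: undominated_of_max_total => f'; rewrite !total_payoff_const.
apply: ler_sum => v _; rewrite ler_pM2l ?invr_gt0 ?ltr0Sn // ler_int f_half.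
exact: revenue_max.
Qed.

Lemma halves_equilibrium : symmetric_equilibrium f.
Proof.
have br := halves_best_reply; have undom := halves_undominated.
exact: (conj br (conj br (conj undom undom))).
Qed.

End HalfBidding.
End Auction.

Theorem proposition2 (x : nat) (beta : bidfun x) :
  symmetric_equilibrium beta <->
  ((forall v : 'I_x.+1, (beta v : nat) = (v : nat) %/ 2)%N \/
   (forall v : 'I_x.+1, (beta v : nat) = ((v : nat) + 1) %/ 2)%N).
Proof.
split=> [/equilibrium_halves [half0 | half1] | [half0 | half1]].
- by left=> v; rewrite half0 addn0.
- by right.
- by apply: (@halves_equilibrium _ 0) => // v; rewrite addn0.
- exact: (@halves_equilibrium _ 1).
Qed.
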